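(* Let $N$ be a positive integer, let $G\in\mathbb{C}^{N\times N}$ and $\hat G^{-1}\in\mathbb{C}^{N\times N}$, and define the modeling-error matrix $\Delta=\hat G^{-1}G$. Write its entries in polar form as $\Delta_{ij}=\Delta_{m,ij}\,e^{\mathrm{i}\,\Delta_{p,ij}}$ with $\Delta_{m,ij}=|\Delta_{ij}|\ge 0$ and $\Delta_{p,ij}\in\mathbb{R}$ (here $\mathrm{i}=\sqrt{-1}$ and $i,j$ are indices), and assume $\Delta_{m,ii}\neq 0$ for all $i$. Let $\rho=\mathrm{diag}(\rho_1,\dots,\rho_N)$ with real $\rho_i$, and suppose that for every $i\in\{1,\dots,N\}$, $$\Delta_{m,ii}\cos\Delta_{p,ii} > \sum_{j\neq i}\Delta_{m,ij} \quad\text{and}\quad 0<\rho_i< 2\,\frac{\Delta_{m,ii}\cos\Delta_{p,ii}-\sum_{j\ne i}\Delta_{m,ij}}{\Delta_{m,ii}^2-\left(\sum_{j\neq i}\Delta_{m,ij}\right)^2}.$$ Then every eigenvalue of $I-\rho\Delta$ has magnitude less than one; in particular $G$ and $\hat G^{-1}$ are invertible, and for every $Y_d\in\mathbb{C}^N$ and every initial $U_0\in\mathbb{C}^N$ the sequence $U_k=U_{k-1}+\rho\,\hat G^{-1}(Y_d-GU_{k-1})$, $k\ge1$, converges to the desired input $U^*=G^{-1}Y_d$.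
   Context: This describes the iterative input update at a fixed frequency $\omega$ for a square multiple-input multiple-output linear system with transfer matrix $G=G(\omega)$, estimated inverse model $\hat G^{-1}=\hat G^{-1}(\omega)$, diagonal iteration gain $\rho=\rho(\omega)$, desired output $Y_d$ and input $U_k$ at iteration $k$. (Under the first condition, the denominator in the bound on $\rho_i$ is positive.) *)

From Stdlib Require Import Reals List.
Import ListNotations.
Open Scope R_scope.

(* Complex numbers z = (Re z, Im z). *)
Definition C : Type := (R * R)%type.
Definition C0 : C := (0, 0).
Definition C1 : C := (1, 0).
Definition RtoC (r : R) : C := (r, 0).
Definition Cadd (z w : C) : C := (fst z + fst w, snd z + snd w).
Definition Copp (z : C) : C := (- fst z, - snd z).
Definition Csub (z w : C) : C := Cadd z (Copp w).
Definition Cmul (z w : C) : C :=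
  (fst z * fst w - snd z * snd w, fst z * snd w + snd z * fst w).
Definition Cmod (z : C) : R := sqrt (fst z ^ 2 + snd z ^ 2).

Definition Csum (n : nat) (f : nat -> C) : C :=
  fold_right (fun k acc => Cadd (f k) acc) C0 (seq 0 n).
Definition Rsum (n : nat) (f : nat -> R) : R :=
  fold_right (fun k acc => f k + acc) 0 (seq 0 n).

(* N x N complex matrices and N-vectors, indexed by 0..N-1
   (values outside the range are irrelevant). *)
Definition Mat : Type := nat -> nat -> C.
Definition Vec : Type := nat -> C.

Definition idM : Mat := fun i j => if Nat.eqb i j then C1 else C0.
Definition mmul (N : nat) (A B : Mat) : Mat :=
  fun i j => Csum N (fun k => Cmul (A i k) (B k j)).
Definition mvmul (N : nat) (A : Mat) (v : Vec) : Vec :=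
  fun i => Csum N (fun k => Cmul (A i k) (v k)).
Definition msub (A B : Mat) : Mat := fun i j => Csub (A i j) (B i j).
Definition diag_mul (rho : nat -> R) (A : Mat) : Mat :=
  fun i j => Cmul (RtoC (rho i)) (A i j).
Definition vsub (u v : Vec) : Vec := fun i => Csub (u i) (v i).

Definition is_inverse (N : nat) (A B : Mat) : Prop :=
  forall i j, (i < N)%nat -> (j < N)%nat ->
    mmul N A B i j = idM i j /\ mmul N B A i j = idM i j.
Definition invertible (N : nat) (A : Mat) : Prop := exists B, is_inverse N A B.

Definition eigenvalue (N : nat) (A : Mat) (lam : C) : Prop :=
  exists v : Vec, (exists i, (i < N)%nat /\ v i <> C0) /\
    forall i, (i < N)%nat -> mvmul N A v i = Cmul lam (v i).

Definition vec_converges (N : nat) (U : nat -> Vec) (L : Vec) : Prop :=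
  forall eps, eps > 0 -> exists K, forall k, (k >= K)%nat ->
    forall i, (i < N)%nat -> Cmod (Csub (U k i) (L i)) < eps.

Fixpoint ilc_iter (N : nat) (rho : nat -> R) (Ghinv G : Mat) (Yd U0 : Vec)
    (k : nat) : Vec :=
  match k with
  | O => U0
  | S k' =>
      let Uk := ilc_iter N rho Ghinv G Yd U0 k' in
      fun i => Cadd (Uk i)
        (Cmul (RtoC (rho i)) (mvmul N Ghinv (vsub Yd (mvmul N G Uk)) i))
  end.

Definition offdiag_mod_sum (N : nat) (A : Mat) (i : nat) : R :=
  Rsum N (fun j => if Nat.eqb j i then 0 else Cmod (A i j)).

(* Write Delta = Ghinv G and M = I - rho Delta.  Row i of M has absolute sum
   |1 - rho_i Delta_ii| + rho_i sum_{j<>i} |Delta_ij|, and squaring shows that the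
   bound on rho_i is exactly the condition for this to be < 1.  So M is a
   contraction for the max-norm: its eigenvalues have modulus < 1, Delta x = 0
   forces the fixed point x = M x to vanish (hence Delta, G and Ghinv are
   invertible), and the tracking error e_k = U_k - G^{-1} Y_d, which satisfies
   e_{k+1} = M e_k, tends to 0. *)

From Pilot Require Import Defs.
From Stdlib Require Import Reals List Lra Lia Psatz.
From Coquelicot Require Complex.
From mathcomp Require all_boot all_order all_algebra Rstruct.
From mathcomp.real_closed Require complex.
Open Scope R_scope.

Lemma Csum_S n f : Csum (S n) f = Cadd (Csum n f) (f n).
Proof.
  unfold Csum. rewrite seq_S, fold_right_app. simpl.
  generalize (seq 0 n); intro l; induction l as [|a l IH]; simpl.
  - unfold Cadd, C0; simpl. f_equal; ring.
  - rewrite IH. unfold Cadd; simpl. f_equal; ring.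
Qed.

Lemma Rsum_S n f : Rsum (S n) f = Rsum n f + f n.
Proof.
  unfold Rsum. rewrite seq_S, fold_right_app. simpl.
  generalize (seq 0 n); intro l; induction l as [|a l IH]; simpl.
  - ring.
  - rewrite IH. ring.
Qed.

Lemma Rsum_le n f g :
  (forall k, (k < n)%nat -> f k <= g k) -> Rsum n f <= Rsum n g.
Proof.
  induction n as [|n IH]; intros Hfg; [apply Rle_refl|].
  rewrite !Rsum_S. apply Rplus_le_compat; auto.
Qed.

Lemma Rsum_ext n f g :
  (forall k, (k < n)%nat -> f k = g k) -> Rsum n f = Rsum n g.
Proof.
  induction n as [|n IH]; intros Hfg; [reflexivity|].
  rewrite !Rsum_S, IH, Hfg by auto. reflexivity.
Qed.

Lemma Rsum_plus n f g : Rsum n (fun k => f k + g k) = Rsum n f + Rsum n g.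
Proof.
  induction n as [|n IH]; [unfold Rsum; simpl; ring|].
  rewrite !Rsum_S, IH. ring.
Qed.

Lemma Rsum_scal n c f : Rsum n (fun k => c * f k) = c * Rsum n f.
Proof.
  induction n as [|n IH]; [unfold Rsum; simpl; ring|].
  rewrite !Rsum_S, IH. ring.
Qed.

Lemma Rsum_delta n i a :
  (i < n)%nat -> Rsum n (fun k => if Nat.eqb k i then a else 0) = a.
Proof.
  assert (Hbelow : forall m, (m <= i)%nat ->
            Rsum m (fun k => if Nat.eqb k i then a else 0) = 0).
  { induction m as [|m IH]; intros Hm; [reflexivity|].
    rewrite Rsum_S, IH by lia.
    destruct (Nat.eqb_spec m i); [lia | ring]. }
  induction n as [|n IH]; intros Hi; [lia|].
  rewrite Rsum_S. destruct (Nat.eqb_spec n i) as [->|Hne].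
  - rewrite Hbelow by lia. ring.
  - rewrite IH by lia. ring.
Qed.

Lemma Cmod_triangle z w : Cmod (Cadd z w) <= Cmod z + Cmod w.
Proof. exact (Complex.Cmod_triangle z w). Qed.

Lemma Cmod_mult z w : Cmod (Cmul z w) = Cmod z * Cmod w.
Proof. exact (Complex.Cmod_mult z w). Qed.

Lemma Cmod_ge_0 z : 0 <= Cmod z.
Proof. exact (Complex.Cmod_ge_0 z). Qed.

Lemma Cmod_eq_0 z : Cmod z = 0 -> z = C0.
Proof. exact (Complex.Cmod_eq_0 z). Qed.

Lemma Cmod_Csum n f : Cmod (Csum n f) <= Rsum n (fun k => Cmod (f k)).
Proof.
  induction n as [|n IH].
  - apply Req_le, Complex.Cmod_0.
  - rewrite Csum_S, Rsum_S. eapply Rle_trans; [apply Cmod_triangle | lra].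
Qed.

Lemma Cmod_RtoC_mul r w : 0 <= r -> Cmod (Cmul (RtoC r) w) = r * Cmod w.
Proof.
  intros Hr. rewrite Cmod_mult. f_equal.
  change (Complex.Cmod (Complex.RtoC r) = r).
  rewrite Complex.Cmod_R. apply Rabs_right; lra.
Qed.

Lemma Cmod_C0_sub w : Cmod (Csub C0 w) = Cmod w.
Proof. destruct w; unfold Cmod, Csub, Cadd, Copp, C0; simpl. f_equal; ring. Qed.

(* [max_upto n f] is the maximum of 0, f 0, ..., f (n - 1); the 0 is harmless
   since it is only applied to nonnegative families. *)
Fixpoint max_upto (n : nat) (f : nat -> R) : R :=
  match n with O => 0 | S n' => Rmax (max_upto n' f) (f n') end.

Lemma max_upto_nonneg n f : 0 <= max_upto n f.
Proof.
  induction n as [|n IH]; simpl; [lra|].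
  eapply Rle_trans; [apply IH | apply Rmax_l].
Qed.

Lemma max_upto_ge n f k : (k < n)%nat -> f k <= max_upto n f.
Proof.
  induction n as [|n IH]; intros Hk; simpl; [lia|].
  destruct (Nat.eq_dec k n) as [->|Hne]; [apply Rmax_r|].
  eapply Rle_trans; [apply IH; lia | apply Rmax_l].
Qed.

Lemma max_upto_le n f c :
  0 <= c -> (forall k, (k < n)%nat -> f k <= c) -> max_upto n f <= c.
Proof.
  induction n as [|n IH]; intros Hc Hf; simpl; [lra|].
  apply Rmax_lub; auto.
Qed.

Lemma max_upto_lt n f c :
  0 < c -> (forall k, (k < n)%nat -> f k < c) -> max_upto n f < c.
Proof.
  induction n as [|n IH]; intros Hc Hf; simpl; [lra|].
  apply Rmax_lub_lt; auto.
Qed.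

Lemma max_upto_ext n f g :
  (forall k, (k < n)%nat -> f k = g k) -> max_upto n f = max_upto n g.
Proof.
  induction n as [|n IH]; intros Hfg; simpl; [reflexivity|].
  rewrite IH, Hfg by auto. reflexivity.
Qed.

Lemma mul_max_upto_le n c f b : 0 <= c -> 0 <= b ->
  (forall k, (k < n)%nat -> c * f k <= b) -> c * max_upto n f <= b.
Proof.
  induction n as [|n IH]; intros Hc Hb Hf; simpl; [lra|].
  apply Rmax_case; auto.
Qed.

Definition vnorm (N : nat) (x : Vec) : R := max_upto N (fun k => Cmod (x k)).
Definition row_abs_sum (N : nat) (M : Mat) (i : nat) : R :=
  Rsum N (fun k => Cmod (M i k)).
Definition mnorm (N : nat) (M : Mat) : R := max_upto N (row_abs_sum N M).

Lemma Cmod_le_vnorm N x k : (k < N)%nat -> Cmod (x k) <= vnorm N x.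
Proof. apply (max_upto_ge N (fun k => Cmod (x k))). Qed.

Lemma vnorm_ext N x y :
  (forall k, (k < N)%nat -> x k = y k) -> vnorm N x = vnorm N y.
Proof. intros Hxy. apply max_upto_ext. intros k Hk. rewrite Hxy; auto. Qed.

Lemma vnorm_eq_0 N x : vnorm N x = 0 -> forall i, (i < N)%nat -> x i = C0.
Proof.
  intros Hx i Hi. apply Cmod_eq_0.
  pose proof (Cmod_le_vnorm N x i Hi). pose proof (Cmod_ge_0 (x i)). lra.
Qed.

Lemma Cmod_mvmul_le N M x i : (i < N)%nat ->
  Cmod (mvmul N M x i) <= mnorm N M * vnorm N x.
Proof.
  intros Hi. unfold mvmul. eapply Rle_trans; [apply Cmod_Csum|].
  apply Rle_trans with (row_abs_sum N M i * vnorm N x).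
  - unfold row_abs_sum. rewrite Rmult_comm, <- Rsum_scal.
    apply Rsum_le. intros k Hk. rewrite Cmod_mult, Rmult_comm.
    apply Rmult_le_compat_r; [apply Cmod_ge_0 | apply Cmod_le_vnorm; exact Hk].
  - apply Rmult_le_compat_r; [apply max_upto_nonneg|].
    apply (max_upto_ge N (row_abs_sum N M)); exact Hi.
Qed.

Lemma vnorm_mvmul_le N M x : vnorm N (mvmul N M x) <= mnorm N M * vnorm N x.
Proof.
  apply max_upto_le; [apply Rmult_le_pos; apply max_upto_nonneg|].
  intros i Hi. apply Cmod_mvmul_le; exact Hi.
Qed.

Section Contraction.
Variables (N : nat) (M : Mat).
Hypothesis mnorm_lt1 : mnorm N M < 1.

Let mnorm_ge0 : 0 <= mnorm N M := max_upto_nonneg _ _.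

Lemma contraction_eigenvalue lam : eigenvalue N M lam -> Cmod lam < 1.
Proof.
  intros [v [[i [Hi Hvi]] Hv]].
  assert (Hpos : 0 < vnorm N v).
  { destruct (Rle_lt_or_eq_dec 0 (vnorm N v)) as [|E];
      [apply max_upto_nonneg | assumption |].
    exfalso. exact (Hvi (vnorm_eq_0 N v (eq_sym E) i Hi)). }
  assert (Cmod lam * vnorm N v <= mnorm N M * vnorm N v).
  { apply mul_max_upto_le; [apply Cmod_ge_0 | nra |].
    intros k Hk. rewrite <- Cmod_mult, <- Hv by exact Hk.
    apply Cmod_mvmul_le; exact Hk. }
  nra.
Qed.

Lemma contraction_fixpoint x :
  (forall i, (i < N)%nat -> mvmul N M x i = x i) ->
  forall i, (i < N)%nat -> x i = C0.
Proof.
  intros Hfix. apply vnorm_eq_0.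
  pose proof (vnorm_mvmul_le N M x) as Hle.
  rewrite (vnorm_ext N (mvmul N M x) x Hfix) in Hle.
  pose proof (max_upto_nonneg N (fun k => Cmod (x k))). fold (vnorm N x) in *.
  nra.
Qed.

Lemma contraction_orbit_vanishes (e : nat -> Vec) :
  (forall k i, (i < N)%nat -> e (S k) i = mvmul N M (e k) i) ->
  forall eps, eps > 0 -> exists K, forall k, (k >= K)%nat ->
    forall i, (i < N)%nat -> Cmod (e k i) < eps.
Proof.
  intros He eps Heps.
  set (q := mnorm N M) in *. set (E0 := vnorm N (e 0%nat)).
  assert (HE0 : 0 <= E0) by apply max_upto_nonneg.
  assert (Hdecay : forall k, vnorm N (e k) <= q ^ k * E0).
  { induction k as [|k IH].
    { rewrite pow_O, Rmult_1_l. apply Rle_refl. }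
    change (q ^ S k) with (q * q ^ k).
    rewrite (vnorm_ext N (e (S k)) (mvmul N M (e k))) by auto.
    eapply Rle_trans; [apply vnorm_mvmul_le|].
    rewrite Rmult_assoc. apply Rmult_le_compat_l; assumption. }
  set (y := eps / (E0 + 1)).
  assert (Hy : 0 < y) by (apply Rdiv_lt_0_compat; lra).
  assert (HyE0 : y * E0 < eps).
  { replace eps with (y * (E0 + 1)) by (unfold y; field; lra). nra. }
  destruct (pow_lt_1_zero q ltac:(rewrite Rabs_right; lra) y Hy) as [K HK].
  exists K. intros k Hk i Hi.
  specialize (HK k Hk). rewrite Rabs_right in HK by (apply Rle_ge, pow_le; lra).
  pose proof (Cmod_le_vnorm N (e k) i Hi). pose proof (Hdecay k).
  assert (q ^ k * E0 <= y * E0) by (apply Rmult_le_compat_r; lra).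
  lra.
Qed.

End Contraction.

Lemma row_abs_sum_I_sub_diag_mul N rho D i : 0 <= rho i -> (i < N)%nat ->
  row_abs_sum N (msub idM (diag_mul rho D)) i =
  Cmod (msub idM (diag_mul rho D) i i) + rho i * offdiag_mod_sum N D i.
Proof.
  intros Hr Hi. unfold row_abs_sum, offdiag_mod_sum.
  rewrite <- Rsum_scal, <- (Rsum_delta N i (Cmod (msub idM (diag_mul rho D) i i)) Hi).
  rewrite <- Rsum_plus. apply Rsum_ext. intros k _.
  destruct (Nat.eqb_spec k i) as [->|Hne]; [ring|].
  assert (Hoff : msub idM (diag_mul rho D) i k = Csub C0 (Cmul (RtoC (rho i)) (D i k))).
  { unfold msub, idM, diag_mul. destruct (Nat.eqb_spec i k); [lia | reflexivity]. }
  rewrite Hoff, Cmod_C0_sub, Cmod_RtoC_mul by exact Hr. ring.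
Qed.

(* The diagonal entry of I - rho Delta is 1 - r m e^{i p}; squaring shows that
   the condition on r is exactly |1 - r m e^{i p}| < 1 - r R. *)
Lemma Cmod_one_sub_polar_lt (r m p R : R) :
  0 <= m -> 0 <= R -> R < m * cos p -> 0 < r ->
  r < 2 * ((m * cos p - R) / (m ^ 2 - R ^ 2)) ->
  Cmod (1 - r * (m * cos p), - (r * (m * sin p))) + r * R < 1.
Proof.
  intros Hm HR Hdom Hr Hrb.
  pose proof (sin2_cos2 p) as Hcs. unfold Rsqr in Hcs.
  pose proof (COS_bound p) as [_ Hc1].
  assert (Hden : 0 < m ^ 2 - R ^ 2) by nra.
  assert (Hk : r * (m ^ 2 - R ^ 2) < 2 * (m * cos p - R)).
  { apply (Rmult_lt_compat_r (m ^ 2 - R ^ 2)) in Hrb; [|exact Hden].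
    replace (2 * ((m * cos p - R) / (m ^ 2 - R ^ 2)) * (m ^ 2 - R ^ 2))
      with (2 * (m * cos p - R)) in Hrb by (field; lra).
    exact Hrb. }
  assert (Hpos : 0 < 1 - r * R) by nra.
  enough (Hsqrt : Cmod (1 - r * (m * cos p), - (r * (m * sin p))) < 1 - r * R) by lra.
  unfold Cmod; simpl fst; simpl snd.
  rewrite <- (sqrt_pow2 (1 - r * R)) by lra.
  apply sqrt_lt_1_alt. split; [apply Rplus_le_le_0_compat; apply pow2_ge_0|].
  assert (Hgap : 0 < r * (2 * (m * cos p - R) - r * (m ^ 2 - R ^ 2))).
  { apply Rmult_lt_0_compat; lra. }
  replace ((1 - r * (m * cos p)) ^ 2 + (- (r * (m * sin p))) ^ 2)
    with (1 - 2 * r * (m * cos p) + r ^ 2 * m ^ 2 * (sin p * sin p + cos p * cos p))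
    by ring.
  rewrite Hcs. nra.
Qed.

Lemma offdiag_mod_sum_nonneg N D i : 0 <= offdiag_mod_sum N D i.
Proof.
  unfold offdiag_mod_sum. induction N as [|N IH]; [apply Rle_refl|].
  rewrite Rsum_S. destruct (Nat.eqb N i); [lra|].
  pose proof (Cmod_ge_0 (D i N)). lra.
Qed.

Lemma mnorm_I_sub_diag_mul_lt1 N D rho phase :
  (forall i, (i < N)%nat ->
     D i i = (Cmod (D i i) * cos (phase i i), Cmod (D i i) * sin (phase i i))) ->
  (forall i, (i < N)%nat -> Cmod (D i i) * cos (phase i i) > offdiag_mod_sum N D i) ->
  (forall i, (i < N)%nat ->
     0 < rho i /\
     rho i < 2 * ((Cmod (D i i) * cos (phase i i) - offdiag_mod_sum N D i)
                  / (Cmod (D i i) ^ 2 - (offdiag_mod_sum N D i) ^ 2))) ->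
  mnorm N (msub idM (diag_mul rho D)) < 1.
Proof.
  intros Hpolar Hdom Hrho. apply max_upto_lt; [lra|]. intros i Hi.
  destruct (Hrho i Hi) as [Hr Hrb].
  rewrite row_abs_sum_I_sub_diag_mul by (lra || exact Hi).
  pose proof (Hpolar i Hi) as Hp. pose proof (Cmod_ge_0 (D i i)) as Hm.
  set (m := Cmod (D i i)) in *.
  replace (msub idM (diag_mul rho D) i i)
    with (1 - rho i * (m * cos (phase i i)), - (rho i * (m * sin (phase i i)))).
  - apply Cmod_one_sub_polar_lt; [exact Hm | apply offdiag_mod_sum_nonneg | | |];
      [exact (Hdom i Hi) | exact Hr | exact Hrb].
  - unfold msub, idM, diag_mul. rewrite Nat.eqb_refl, Hp.
    unfold Csub, Cadd, Copp, Cmul, RtoC, C1; simpl. f_equal; ring.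
Qed.

(* Invertibility needs determinants, so the linear-algebra identities are proved
   by transporting to MathComp matrices over [R[i]]. *)
Module ComplexMatrix.
Import all_boot all_order all_algebra Rstruct complex.
Import GRing.Theory Num.Theory.
Local Open Scope ring_scope.
Local Open Scope complex_scope.

Definition toC (z : Defs.C) : R[i] := Complex z.1 z.2.
Definition fromC (w : R[i]) : Defs.C := let: Complex a b := w in (a, b).

Lemma toCK : cancel toC fromC. Proof. by case. Qed.
Lemma fromCK : cancel fromC toC. Proof. by case. Qed.
Lemma toC_inj : injective toC. Proof. exact: can_inj toCK. Qed.

Lemma toC_add z w : toC (Cadd z w) = toC z + toC w.
Proof. by case: z => a b; case: w. Qed.

Lemma toC_mul z w : toC (Cmul z w) = toC z * toC w.
Proof. by case: z => a b; case: w. Qed.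

Lemma toC_sub z w : toC (Csub z w) = toC z - toC w.
Proof. by case: z => a b; case: w. Qed.

Lemma toC_RtoC r : toC (RtoC r) = r%:C.
Proof. by []. Qed.

Lemma toC_idM i j : toC (idM i j) = (i == j)%:R.
Proof.
by rewrite /idM; case: (PeanoNat.Nat.eqb_spec i j) => [->|/eqP/negbTE ->];
  rewrite ?eqxx.
Qed.

Lemma toC_Csum n f : toC (Csum n f) = \sum_(k < n) toC (f k).
Proof.
elim: n => [|n IH]; first by rewrite big_ord0.
by rewrite Csum_S toC_add IH big_ord_recr.
Qed.

Definition toM N (A : Mat) : 'M[R[i]]_N := \matrix_(i < N, j < N) toC (A i j).
Definition toV N (x : Vec) : 'cV[R[i]]_N := \col_(i < N) toC (x i).
Definition diag_rho N (rho : nat -> Rdefinitions.R) : 'M[R[i]]_N :=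
  diag_mx (\row_(i < N) (rho i)%:C).

Lemma toM_entry N A i j (iN : (i < N)%N) (jN : (j < N)%N) :
  toC (A i j) = toM N A (Ordinal iN) (Ordinal jN).
Proof. by rewrite mxE. Qed.

Lemma toV_entry N x i (iN : (i < N)%N) : toC (x i) = toV N x (Ordinal iN) 0.
Proof. by rewrite mxE. Qed.

Lemma toV_inj N x y : toV N x = toV N y -> forall i, (i < N)%coq_nat -> x i = y i.
Proof. by move=> e i /ltP iN; apply: toC_inj; rewrite !(toV_entry N _ _ iN) e. Qed.

Lemma toV_eq0 N x : (forall i, (i < N)%coq_nat -> x i = Defs.C0) -> toV N x = 0.
Proof. by move=> x0; apply/matrixP => i j; rewrite !mxE x0 //; apply/ltP. Qed.

Lemma toM_mmul N A B : toM N (mmul N A B) = toM N A *m toM N B.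
Proof.
apply/matrixP => i j; rewrite !mxE toC_Csum.
by apply: eq_bigr => k _; rewrite toC_mul !mxE.
Qed.

Lemma toV_mvmul N A x : toV N (mvmul N A x) = toM N A *m toV N x.
Proof.
apply/matrixP => i j; rewrite !mxE toC_Csum.
by apply: eq_bigr => k _; rewrite toC_mul !mxE.
Qed.

Lemma toV_vsub N x y : toV N (vsub x y) = toV N x - toV N y.
Proof. by apply/matrixP => i j; rewrite !mxE toC_sub. Qed.

Lemma toM_I_sub_diag_mul N rho A :
  toM N (msub idM (diag_mul rho A)) = 1%:M - diag_rho N rho *m toM N A.
Proof.
apply/matrixP => i j.
by rewrite mul_diag_mx !mxE toC_sub toC_idM toC_mul toC_RtoC.
Qed.

Lemma toV_ilc_iter_S N rho H G Yd U0 k :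
  let U := ilc_iter N rho H G Yd U0 k in
  toV N (ilc_iter N rho H G Yd U0 k.+1) =
    toV N U + diag_rho N rho *m (toM N H *m (toV N Yd - toM N G *m toV N U)).
Proof.
move=> U; rewrite -toV_mvmul -toV_vsub -toV_mvmul.
by apply/matrixP => i j; rewrite mul_diag_mx !mxE toC_add toC_mul toC_RtoC.
Qed.

Lemma is_inverse_mx N A B : is_inverse N A B ->
  toM N A *m toM N B = 1%:M /\ toM N B *m toM N A = 1%:M.
Proof.
move=> AB; split; apply/matrixP => i j;
  have [h1 h2] := AB i j (ltP (ltn_ord i)) (ltP (ltn_ord j));
  by rewrite -toM_mmul !mxE ?h1 ?h2 toC_idM.
Qed.

Definition fromM N (P : 'M[R[i]]_N) : Mat := fun i j =>
  if insub i is Some i' then if insub j is Some j' then fromC (P i' j') else Defs.C0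
  else Defs.C0.
Definition fromV N (v : 'cV[R[i]]_N) : Vec := fun i =>
  if insub i is Some i' then fromC (v i' 0) else Defs.C0.

Lemma insub_ord N (i : 'I_N) : insub (val i) = Some i.
Proof. exact: valK. Qed.

Lemma fromMK N : cancel (@fromM N) (@toM N).
Proof. by move=> P; apply/matrixP => i j; rewrite mxE /fromM !insub_ord fromCK. Qed.

Lemma fromVK N : cancel (@fromV N) (@toV N).
Proof.
by move=> v; apply/matrixP => i j; rewrite (ord1 j) mxE /fromV insub_ord fromCK.
Qed.

Lemma unitmx_of_ker0 (F : fieldType) n (P : 'M[F]_n) :
  (forall v : 'cV_n, P *m v = 0 -> v = 0) -> P \in unitmx.
Proof.
move=> Pinj; rewrite -unitmx_tr -row_free_unit; apply: inj_row_free => v vP0.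
apply: trmx_inj; rewrite [RHS]trmx0; apply: Pinj.
by rewrite -[P]trmxK -trmx_mul vP0 trmx0.
Qed.

Lemma invertible_of_unitmx N A : toM N A \in unitmx -> invertible N A.
Proof.
move=> uA; exists (fromM N (invmx (toM N A))) => i j /ltP iN /ltP jN.
by split; apply: toC_inj; rewrite !(toM_entry N _ _ _ iN jN) !toM_mmul fromMK
  ?mulmxV ?mulVmx // !mxE toC_idM.
Qed.

Lemma invertible_of_ker0 N A B :
  (forall x, (forall i, (i < N)%coq_nat -> mvmul N (mmul N A B) x i = Defs.C0) ->
     forall i, (i < N)%coq_nat -> x i = Defs.C0) ->
  invertible N A /\ invertible N B.
Proof.
move=> ABinj.
have : toM N A *m toM N B \in unitmx.
  apply: unitmx_of_ker0 => v ABv0; rewrite -[v]fromVK; apply/toV_eq0/ABinj.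
  move=> k /ltP kN; apply: toC_inj.
  by rewrite (toV_entry N _ _ kN) toV_mvmul toM_mmul fromVK ABv0 mxE.
by rewrite unitmx_mul => /andP[uA uB]; split; apply: invertible_of_unitmx.
Qed.

Lemma mvmul_I_sub_diag_mul_ker N rho A x :
  (forall i, (i < N)%coq_nat -> mvmul N A x i = Defs.C0) ->
  forall i, (i < N)%coq_nat -> mvmul N (msub idM (diag_mul rho A)) x i = x i.
Proof.
move=> Ax0; apply: toV_inj.
rewrite toV_mvmul toM_I_sub_diag_mul mulmxBl mul1mx -mulmxA -toV_mvmul.
by rewrite (toV_eq0 _ _ Ax0) mulmx0 subr0.
Qed.

Lemma ilc_error_step N rho H G Ginv Yd U0 k : is_inverse N G Ginv ->
  let e k := vsub (ilc_iter N rho H G Yd U0 k) (mvmul N Ginv Yd) in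
  forall i, (i < N)%coq_nat ->
    e k.+1 i = mvmul N (msub idM (diag_mul rho (mmul N H G))) (e k) i.
Proof.
move=> /is_inverse_mx[GGinv _] e; apply: toV_inj.
rewrite /e toV_mvmul !toV_vsub toV_ilc_iter_S toM_I_sub_diag_mul toM_mmul toV_mvmul.
set U := toV N _; set L := toM N Ginv *m _.
have -> : toV N Yd = toM N G *m L by rewrite mulmxA GGinv mul1mx.
rewrite -mulmxBr -(opprB U) mulmxN !mulmxA mulmxN mulmxBl mul1mx.
by rewrite mulmxA addrAC.
Qed.
End ComplexMatrix.

Theorem lemma2 (N : nat) (G Ghinv : Mat) (rho : nat -> R)
    (phase : nat -> nat -> R) :
  (1 <= N)%nat ->
  (* polar form Delta_ij = Delta_m,ij e^{i Delta_p,ij}, Delta = Ghinv G *)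
  (forall i j, (i < N)%nat -> (j < N)%nat ->
     mmul N Ghinv G i j =
       (Cmod (mmul N Ghinv G i j) * cos (phase i j),
        Cmod (mmul N Ghinv G i j) * sin (phase i j))) ->
  (forall i, (i < N)%nat -> Cmod (mmul N Ghinv G i i) <> 0) ->
  (forall i, (i < N)%nat ->
     Cmod (mmul N Ghinv G i i) * cos (phase i i)
       > offdiag_mod_sum N (mmul N Ghinv G) i) ->
  (forall i, (i < N)%nat ->
     0 < rho i /\
     rho i < 2 * ((Cmod (mmul N Ghinv G i i) * cos (phase i i)
                   - offdiag_mod_sum N (mmul N Ghinv G) i)
                  / (Cmod (mmul N Ghinv G i i) ^ 2
                     - (offdiag_mod_sum N (mmul N Ghinv G) i) ^ 2))) ->
  (forall lam, eigenvalue N (msub idM (diag_mul rho (mmul N Ghinv G))) lam ->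
     Cmod lam < 1) /\
  invertible N G /\ invertible N Ghinv /\
  (forall Ginv, is_inverse N G Ginv ->
     forall Yd U0 : Vec,
       vec_converges N (ilc_iter N rho Ghinv G Yd U0) (mvmul N Ginv Yd)).
Proof.
  intros _ Hpolar _ Hdom Hrho.
  set (D := mmul N Ghinv G) in *.
  set (M := msub idM (diag_mul rho D)).
  assert (HM : mnorm N M < 1).
  { apply (mnorm_I_sub_diag_mul_lt1 N D rho phase); auto. }
  assert (HDker : forall x, (forall i, (i < N)%nat -> mvmul N D x i = C0) ->
                  forall i, (i < N)%nat -> x i = C0).
  { intros x Hx. apply (contraction_fixpoint N M HM).
    exact (ComplexMatrix.mvmul_I_sub_diag_mul_ker N rho D x Hx). }
  destruct (ComplexMatrix.invertible_of_ker0 N Ghinv G HDker) as [HGhinv HG].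
  split; [exact (contraction_eigenvalue N M HM)|].
  split; [exact HG|]. split; [exact HGhinv|].
  intros Ginv Hinv Yd U0.
  exact (contraction_orbit_vanishes N M HM _
           (fun k => ComplexMatrix.ilc_error_step N rho Ghinv G Ginv Yd U0 k Hinv)).
Qed.
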